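(* Let $L$ be a finite-dimensional pure, nonnilpotent, solvable Lie algebra over $\mathbb{C}$ of breadth $2$ such that $\dim[L,L]=2$ and $\dim L^k=2$ for all integers $k\geq 2$. Then $L$ has a basis such that one of the following holds (in each case the listed brackets are the only nonzero brackets of basis elements, up to antisymmetry): (1) basis $\{x_1,x_2,x_3,x_4,x_5\}$ with $[x_1,x_5]=x_4$, $[x_2,x_4]=x_4$, $[x_3,x_5]=x_5$; (2) $L=\mathrm{span}\{x_1,x_2\}\oplus\mathrm{span}\{x_3,x_4\}$ (direct sum of Lie algebras) with $[x_1,x_2]=x_2$, $[x_3,x_4]=x_4$; (3) basis $\{x_1,x_2,x_3,x_4\}$ with $[x_1,x_4]=x_3$, $[x_2,x_3]=x_3$, $[x_2,x_4]=x_4$; (4) basis $\{x_1,x_2,x_3\}$ with $[x_1,x_2]=x_2$, $[x_1,x_3]=x_2+x_3$; (5) basis $\{x_1,x_2,x_3\}$ with $[x_1,x_2]=x_2$, $[x_1,x_3]=\gamma x_3$ for some $\gamma\in\mathbb{C}\setminus\{0\}$.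
   Context: For $x\in L$, the breadth of $x$ is $b(x)=\mathrm{rank}(\mathrm{ad}_x)$, and $b(L)=\max\{b(x)\mid x\in L\}$. $L$ is pure if it has no abelian ideal as a direct summand; equivalently $Z(L)\subseteq[L,L]$, where $Z(L)$ is the center. The lower central series is indexed by $L^0=L$, $L^1=[L,L]$ and $L^k=[L,L^{k-1}]$ for $k\geq 2$. *)

From HB Require Import structures.
From mathcomp Require Import all_boot all_order all_algebra.
From mathcomp Require Import complex.
From mathcomp Require Import Rstruct.
From Stdlib Require Import Rdefinitions.
Set Implicit Arguments. Unset Strict Implicit. Unset Printing Implicit Defensive.
Import GRing.Theory.
Local Open Scope ring_scope.

Definition CC : numClosedFieldType := complex Rdefinitions.R.

(* A finite-dimensional Lie algebra over CC is modelled (up to isomorphism)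
   as the space 'rV[CC]_n together with a bracket br. *)
Definition is_lie_bracket (n : nat) (br : 'rV[CC]_n -> 'rV[CC]_n -> 'rV[CC]_n) : Prop :=
  [/\ (forall (a : CC) x y z, br (a *: x + y) z = a *: br x z + br y z),
      (forall (a : CC) x y z, br x (a *: y + z) = a *: br x y + br x z),
      (forall x, br x x = 0) &
      (forall x y z, br x (br y z) + br y (br z x) + br z (br x y) = 0)].

(* Bracket [U,V] of two subspaces (row spaces of square matrices). *)
Definition brmx n (br : 'rV[CC]_n -> 'rV[CC]_n -> 'rV[CC]_n) (U V : 'M[CC]_n) : 'M[CC]_n :=
  (\sum_(i < n) \sum_(j < n) <<br (row i U) (row j V)>>)%MS.

(* Lower central series: L^0 = L, L^1 = [L,L], L^k = [L, L^(k-1)]. *)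
Fixpoint lcs n (br : 'rV[CC]_n -> 'rV[CC]_n -> 'rV[CC]_n) (k : nat) : 'M[CC]_n :=
  match k with
  | 0 => 1%:M
  | k'.+1 => brmx br 1%:M (lcs (n:=n) br k')
  end.

Fixpoint dser n (br : 'rV[CC]_n -> 'rV[CC]_n -> 'rV[CC]_n) (k : nat) : 'M[CC]_n :=
  match k with
  | 0 => 1%:M
  | k'.+1 => brmx br (dser (n:=n) br k') (dser (n:=n) br k')
  end.

Definition lie_nilpotent n (br : 'rV[CC]_n -> 'rV[CC]_n -> 'rV[CC]_n) : Prop := exists k, lcs (n:=n) br k = 0.
Definition lie_solvable n (br : 'rV[CC]_n -> 'rV[CC]_n -> 'rV[CC]_n) : Prop := exists k, dser (n:=n) br k = 0.

Definition lie_ideal n (br : 'rV[CC]_n -> 'rV[CC]_n -> 'rV[CC]_n) (I : 'M[CC]_n) : Prop := (brmx br 1%:M I <= I)%MS.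

Definition lie_pure n (br : 'rV[CC]_n -> 'rV[CC]_n -> 'rV[CC]_n) : Prop :=
  ~ exists I J : 'M[CC]_n,
      [/\ lie_ideal br I, lie_ideal br J, I != 0, brmx br I I = 0 &
          (((I :&: J)%MS == 0 :> 'M[CC]_n) /\ (I + J == 1%:M)%MS)].

Definition ad_mx n (br : 'rV[CC]_n -> 'rV[CC]_n -> 'rV[CC]_n) (x : 'rV[CC]_n) : 'M[CC]_n :=
  \matrix_(i < n) br x (delta_mx 0 i).
Definition breadth_elt n (br : 'rV[CC]_n -> 'rV[CC]_n -> 'rV[CC]_n) (x : 'rV[CC]_n) : nat := \rank (ad_mx br x).
Definition has_breadth n (br : 'rV[CC]_n -> 'rV[CC]_n -> 'rV[CC]_n) (b : nat) : Prop :=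
  (forall x, leq (breadth_elt (n:=n) br x) b) /\ exists x, breadth_elt (n:=n) br x = b.

Definition is_basis n (xs : seq 'rV[CC]_n) : Prop :=
  size xs = n /\ \rank (\matrix_(i < size xs) nth 0 xs i) = n.

(* Let V = [L,L]. Since L^2 = [L,V] lies in V and both have dimension 2, [L,V] = V, so no line
   contains every bracket [x,v] with v in V. This forces V to be abelian (otherwise [V,V] would be
   such a line), so the restrictions of the ad x to V commute: they have a common eigenvector e1,
   and some y0 acts invertibly on V. Purity makes V its own centralizer: if k centralizes V, then
   k - v, where [y0,v] = [y0,k], is central, and a central element outside [L,L] spans an abelian
   direct summand. Hence x |-> ad x restricted to V embeds L/V into a commutative subalgebra of
   gl(V) = gl_2, which is spanned by the identity and any non-scalar element; so dim L is 3 or 4.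
   The Jordan form of ad y0 on V (dimension 3), resp. of a non-scalar element normalised to kill
   e1 (dimension 4), gives the normal forms. *)

From mathcomp Require Import all_boot all_order all_algebra.
From mathcomp Require Import ring zify.
From Stdlib Require Import Classical.
Set Implicit Arguments. Unset Strict Implicit. Unset Printing Implicit Defensive.
Import GRing.Theory.
Local Open Scope ring_scope.

Section RowSpaces.
Variables (F : fieldType) (n : nat).
Implicit Types (u v w x y z : 'rV[F]_n).

Lemma sub_adds_rVP w z u : reflect (exists a b, u = a *: w + b *: z) (u <= w + z)%MS.
Proof.
apply: (iffP idP) => [/sub_addsmxP [c ->]|[a [b ->]]].
  by exists (c.1 0 0), (c.2 0 0); rewrite [c.1]mx11_scalar [c.2]mx11_scalar !mul_scalar_mx !mxE.
by rewrite addmx_sub_adds ?scalemx_sub.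
Qed.

Lemma addmx_scale_sub m (A : 'M[F]_(m, n)) a b x y :
  (x <= A)%MS -> (y <= A)%MS -> ((a *: x + b *: y)%R <= A)%MS.
Proof. by move=> xA yA; apply: addmx_sub; apply: scalemx_sub. Qed.

Lemma sub_adds_of_comb m (A : 'M[F]_(m, n)) a b x y :
  a != 0 -> ((a *: x + b *: y)%R <= A)%MS -> (x <= A + y)%MS.
Proof.
move=> a0 comb.
have -> : x = a^-1 *: (a *: x + b *: y) + (- (a^-1 * b)) *: y.
  by rewrite scalerDr !scalerA mulVf // scale1r scaleNr addrK.
by rewrite addmx_sub_adds ?scalemx_sub ?submx_refl.
Qed.

Lemma free2_eq0 w z a b : w != 0 -> ~~ (z <= w)%MS -> a *: w + b *: z = 0 -> a = 0 /\ b = 0.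
Proof.
move=> w0 zw E; have b0 : b = 0.
  apply: contraNeq zw => b0; apply/sub_rVP; exists (- (b^-1 * a)).
  move/eqP: E; rewrite addrC addr_eq0 => /eqP bz.
  by rewrite scaleNr -scalerA -scalerN -bz scalerA mulVf // scale1r.
split=> //; move: E; rewrite b0 scale0r addr0 => /eqP.
by rewrite scaler_eq0 (negbTE w0) orbF => /eqP.
Qed.

Lemma mxrank_adds_rV m (A : 'M[F]_(m, n)) y : (\rank (A + y)%MS <= (\rank A).+1)%N.
Proof.
have [le _] := mxrank_adds_leqif A y.
by rewrite (leq_trans le) // -[X in (_ <= X)%N]addn1 leq_add2l rank_leq_row.
Qed.

Lemma mxrank_adds_notin m (A : 'M[F]_(m, n)) y :
  ~~ (y <= A)%MS -> \rank (A + y)%MS = (\rank A).+1.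
Proof.
move=> yA; apply/eqP; rewrite eqn_leq mxrank_adds_rV /=.
by apply: rank_ltmx; rewrite ltmxE addsmxSl addsmx_sub submx_refl.
Qed.

Lemma notin_of_mxrank_ltn m1 m2 (A : 'M[F]_(m1, n)) (B : 'M[F]_(m2, n)) :
  (\rank A < \rank B)%N -> exists2 v : 'rV_n, (v <= B)%MS & ~~ (v <= A)%MS.
Proof.
move=> lt; have : ~~ (B <= A)%MS by apply/negP => /mxrankS; rewrite leqNgt lt.
by case/row_subPn => i Hi; exists (row i B); rewrite ?row_sub.
Qed.

Section Rank2.
Variables (m : nat) (V : 'M[F]_(m, n)).
Hypothesis rankV : \rank V = 2.

Lemma rank2_spanned w z : (w <= V)%MS -> (z <= V)%MS -> w != 0 -> ~~ (z <= w)%MS ->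
  (V <= w + z)%MS.
Proof.
move=> wV zV w0 zw; have wzV : (w + z <= V)%MS by rewrite addsmx_sub wV.
have [_ <-] := mxrank_leqif_sup wzV.
by rewrite rankV mxrank_adds_notin // rank_rV w0.
Qed.

Lemma rank2_complete w : (w <= V)%MS -> w != 0 ->
  exists z, [/\ (z <= V)%MS, ~~ (z <= w)%MS & (V <= w + z)%MS].
Proof.
move=> wV w0; have [|z zV zw] := @notin_of_mxrank_ltn _ _ w V.
  by rewrite rankV rank_rV w0.
by exists z; split; rewrite ?rank2_spanned.
Qed.

Lemma rank2_basis : exists w z,
  [/\ (w <= V)%MS, w != 0, (z <= V)%MS, ~~ (z <= w)%MS & (V <= w + z)%MS].
Proof.
have [|w wV w0] := @notin_of_mxrank_ltn _ _ (0 : 'rV_n) V; first by rewrite rankV mxrank0.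
have {}w0 : w != 0 by apply: contraNneq w0 => ->; rewrite sub0mx.
by have [z [zV zw Vwz]] := rank2_complete wV w0; exists w, z.
Qed.

End Rank2.
End RowSpaces.

Local Notation span s := (\matrix_(i < size s) nth 0 s i).

Section Bases.
Variable n : nat.
Implicit Type s : seq 'rV[CC]_n.

Lemma mem_basis_sub s x : x \in s -> (x <= span s)%MS.
Proof.
move=> xs; have lt : (index x s < size s)%N by rewrite index_mem.
by have := row_sub (Ordinal lt) (span s); rewrite rowK nth_index.
Qed.

Lemma is_basis_of_full s m (M : 'M[CC]_(m, n)) : size s = n -> (1%:M <= M)%MS ->
  (M <= span s)%MS -> is_basis s.
Proof.
move=> sz full Ms; split=> //; apply/eqP; rewrite eqn_leq rank_leq_col /=.
by have := mxrankS (submx_trans full Ms); rewrite mxrank1.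
Qed.

End Bases.

Ltac in_basis := apply: mem_basis_sub; by rewrite !inE eqxx ?orbT.

Section LieAlgebra.
Variables (n : nat) (br : 'rV[CC]_n -> 'rV[CC]_n -> 'rV[CC]_n).
Hypothesis Hbr : is_lie_bracket br.
Implicit Types (x y z u v w : 'rV[CC]_n).

Lemma brDl x y z : br (x + y) z = br x z + br y z.
Proof. by case: Hbr => H _ _ _; have := H 1 x y z; rewrite !scale1r. Qed.

Lemma brDr x y z : br x (y + z) = br x y + br x z.
Proof. by case: Hbr => _ H _ _; have := H 1 x y z; rewrite !scale1r. Qed.

Lemma br0l z : br 0 z = 0.
Proof. by apply: (addrI (br 0 z)); rewrite -brDl !addr0. Qed.

Lemma br0r z : br z 0 = 0.
Proof. by apply: (addrI (br z 0)); rewrite -brDr !addr0. Qed.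

Lemma brZl a x y : br (a *: x) y = a *: br x y.
Proof. by case: Hbr => H _ _ _; have := H a x 0 y; rewrite !addr0 br0l addr0. Qed.

Lemma brZr a x y : br x (a *: y) = a *: br x y.
Proof. by case: Hbr => _ H _ _; have := H a x y 0; rewrite !addr0 br0r addr0. Qed.

Lemma brxx x : br x x = 0.
Proof. by case: Hbr. Qed.

Lemma brC x y : br x y = - br y x.
Proof.
apply/eqP; rewrite -subr_eq0 opprK; apply/eqP.
by have := brxx (x + y); rewrite !brDl !brDr !brxx add0r addr0 addrC.
Qed.

Lemma brNl x y : br (- x) y = - br x y.
Proof. by rewrite -scaleN1r brZl scaleN1r. Qed.

Lemma brNr x y : br x (- y) = - br x y.
Proof. by rewrite -scaleN1r brZr scaleN1r. Qed.

Lemma brBl x y z : br (x - y) z = br x z - br y z.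
Proof. by rewrite brDl brNl. Qed.

Lemma brBr x y z : br x (y - z) = br x y - br x z.
Proof. by rewrite brDr brNr. Qed.

Lemma br_leibniz x y z : br x (br y z) = br (br x y) z + br y (br x z).
Proof.
case: Hbr => _ _ _ J; have := J x y z.
rewrite (brC z (br x y)) (brC z x) brNr => H.
by rewrite -[LHS]subr0 -H !opprD !opprK !addrA addrN add0r addrC.
Qed.

Lemma br_suml y I r (P : pred I) (F : I -> 'rV_n) :
  br (\sum_(i <- r | P i) F i) y = \sum_(i <- r | P i) br (F i) y.
Proof. exact: (big_morph (br^~ y) (fun a b => brDl a b y) (br0l y)). Qed.

Lemma br_sumr x I r (P : pred I) (F : I -> 'rV_n) :
  br x (\sum_(i <- r | P i) F i) = \sum_(i <- r | P i) br x (F i).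
Proof. exact: (big_morph (br x) (brDr x) (br0r x)). Qed.

Lemma ad_mxE y u : u *m ad_mx br y = br y u.
Proof.
rewrite mulmx_sum_row [in RHS](row_sum_delta u) br_sumr.
by apply: eq_bigr => i _; rewrite rowK brZr.
Qed.

Lemma brmx_subP m (U U' : 'M_n) (S : 'M_(m, n)) :
  (forall i j, (br (row i U) (row j U') <= S)%MS) -> (brmx br U U' <= S)%MS.
Proof.
move=> H; apply/sumsmx_subP => i _; apply/sumsmx_subP => j _.
by rewrite genmxE.
Qed.

Lemma br_sub_brmx (U U' : 'M_n) x y :
  (x <= U)%MS -> (y <= U')%MS -> (br x y <= brmx br U U')%MS.
Proof.
move=> /mulmxKpV <- /mulmxKpV <-.
rewrite !mulmx_sum_row br_suml; apply: summx_sub => i _.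
rewrite br_sumr; apply: summx_sub => j _.
rewrite brZl brZr; apply: scalemx_sub; apply: scalemx_sub.
by apply: (sumsmx_sup i) => //; apply: (sumsmx_sup j) => //; rewrite genmxE.
Qed.

Local Notation V := (lcs br 1).

Lemma brV x y : (br x y <= V)%MS.
Proof. by apply: br_sub_brmx; rewrite submx1. Qed.

Lemma br_plane w z p q : (p <= w + z)%MS -> (q <= w + z)%MS ->
  exists c, br p q = c *: br w z.
Proof.
case/sub_adds_rVP => a [b ->]; case/sub_adds_rVP => a' [b' ->].
exists (a * b' - b * a').
rewrite !brDl !brDr !brZl !brZr !brxx (brC z w).
by apply/rowP => i; rewrite !mxE; ring.
Qed.

Lemma central_not_pure z0 : ~~ (z0 <= V)%MS -> (forall y, br z0 y = 0) -> ~ lie_pure br.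
Proof.
move=> z0V z0c; apply; set A := (V + z0)%MS; set J := (V + A^C)%MS.
have z00 : z0 != 0 by apply: contraNneq z0V => ->; rewrite sub0mx.
have brz0 U i j : br (row i U) (row j <<z0>>%MS) = 0.
  have /sub_rVP [c ->] : (row j <<z0>> <= z0)%MS.
    by apply: submx_trans (row_sub j _) _; rewrite genmxE.
  by rewrite brZr brC z0c oppr0 scaler0.
have rankA : \rank A = (\rank V).+1 by rewrite mxrank_adds_notin.
have rankJ : (\rank J <= n.-1)%N.
  have [le _] := mxrank_adds_leqif V (A^C)%MS.
  by rewrite (leq_trans le) // mxrank_compl rankA; have := rank_leq_col A; lia.
have full : (1%:M <= <<z0>> + J)%MS.
  apply: submx_trans (_ : (A + A^C <= _)%MS); first by rewrite sub1mx addsmx_compl_full.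
  by rewrite /J addsmxA addsmxS // addsmxC addsmxS // genmxE.
exists <<z0>>%MS, J; split.
- by apply: brmx_subP => i j; rewrite brz0 sub0mx.
- by apply: brmx_subP => i j; apply: submx_trans (brV _ _) (addsmxSl _ _).
- by rewrite -mxrank_eq0 genmxE mxrank_eq0.
- by apply/eqP; rewrite -submx0; apply: brmx_subP => i j; rewrite brz0 sub0mx.
split; last by rewrite submx1 full.
rewrite -mxrank_eq0; have := mxrank_sum_cap <<z0>>%MS J.
move: full; rewrite sub1mx /row_full genmxE rank_rV z00 => /eqP ->.
by have := rank_leq_col A; lia.
Qed.

Section DerivedPlane.
Hypothesis rankV : \rank V = 2.
Hypothesis rank_lcs2 : \rank (lcs br 2) = 2.

Lemma brV_notin_line w : ~ (forall x v, (v <= V)%MS -> (br x v <= w)%MS).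
Proof.
move=> H; have : (lcs br 2 <= w)%MS by apply: brmx_subP => i j; rewrite H ?row_sub.
by move/mxrankS; rewrite rank_lcs2 rank_rV; case: (w != 0).
Qed.

Lemma derived_abelian v w : (v <= V)%MS -> (w <= V)%MS -> br v w = 0.
Proof.
have [u1 [u2 [u1V u10 u2V u21 Vu]]] := rank2_basis rankV.
have inVu (p : 'rV_n) : (p <= V)%MS -> (p <= u1 + u2)%MS by move/submx_trans; apply.
suff u12 : br u1 u2 = 0.
  by move=> /inVu vu /inVu wu; have [c ->] := br_plane vu wu; rewrite u12 scaler0.
apply/eqP; apply: contraT => w0n; exfalso; set w0 := br u1 u2 in w0n.
have w0V : (w0 <= V)%MS by apply: brV.
have cent_w0 u : (u <= V)%MS -> br u w0 = 0 -> (u <= w0)%MS.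
  move=> uV uw0; apply: contraT => uw; have Vw := rank2_spanned rankV w0V uV w0n uw.
  have [c Hc] := br_plane (submx_trans u1V Vw) (submx_trans u2V Vw).
  by move: w0n; rewrite /w0 Hc brC uw0 oppr0 scaler0 eqxx.
apply: (@brV_notin_line w0) => x u uV.
have [s Hs] : exists s, br x w0 = s *: w0.
  have [c1 H1] := br_plane (inVu _ (brV x u1)) (inVu _ u2V).
  have [c2 H2] := br_plane (inVu _ u1V) (inVu _ (brV x u2)).
  by exists (c1 + c2); rewrite /w0 br_leibniz H1 H2 scalerDl.
have [mu Hmu] := br_plane (inVu _ uV) (inVu _ w0V).
apply: cent_w0; first exact: brV.
have := br_leibniz x u w0; rewrite Hmu brZr Hs brZr Hmu !scalerA [s * mu]mulrC => /eqP.
by rewrite -subr_eq subrr eq_sym => /eqP.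
Qed.

Lemma ad_commute_on_V x y v : (v <= V)%MS -> br x (br y v) = br y (br x v).
Proof. by move=> vV; rewrite br_leibniz (derived_abelian (brV x y) vV) add0r. Qed.

Definition scalar_on_V y := exists a, forall v, (v <= V)%MS -> br y v = a *: v.

Lemma scalar_on_span y e f a : (V <= e + f)%MS -> br y e = a *: e -> br y f = a *: f ->
  scalar_on_V y.
Proof.
move=> Vef ye yf; exists a => v /submx_trans /(_ Vef) /sub_adds_rVP [c [d ->]].
by rewrite brDr !brZr ye yf scalerDr !scalerA mulrC [d * a]mulrC.
Qed.

Lemma ad_eigenvector y : exists e mu, [/\ (e <= V)%MS, e != 0 & br y e = mu *: e].
Proof.
set B := row_base V; have BV : (B :=: V)%MS by apply: eq_row_base.
have stab : (B *m ad_mx br y <= B)%MS.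
  by rewrite BV; apply/row_subP => i; rewrite row_mul ad_mxE brV.
have [mu /eigenvalueP [v0 Hv0 v00]] :=
  @eigenvalue_closed CC _ (B *m ad_mx br y *m pinvmx B) (ltac:(by rewrite rankV)).
exists (v0 *m B), mu; split.
- by rewrite -BV submxMl.
- by rewrite mulmx_free_eq0 // row_base_free.
by rewrite -ad_mxE -mulmxA -(mulmxKpV stab) mulmxA Hv0 -scalemxAl.
Qed.

Lemma common_eigenvector :
  exists e1, [/\ (e1 <= V)%MS, e1 != 0 & forall x, (br x e1 <= e1)%MS].
Proof.
have [[x0 nsx0]|allsc] := classic (exists x0, ~ scalar_on_V x0).
  have [e [mu [eV e0 x0e]]] := ad_eigenvector x0.
  exists e; split=> // x; apply: contraT => xe; case: nsx0.
  apply: (@scalar_on_span x0 e (br x e) mu) => //; first exact: rank2_spanned (brV x e) _ _.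
  by rewrite ad_commute_on_V // x0e brZr.
have [e [mu [eV e0 _]]] := ad_eigenvector 0.
exists e; split=> // x.
have [a xe] : scalar_on_V x by apply: NNPP => nsx; apply: allsc; exists x.
by rewrite xe // scalemx_sub.
Qed.

(* A basis (e1, z) of V in which every ad x restricted to V is upper triangular. *)
Definition is_frame e1 z :=
  [/\ (e1 <= V)%MS, (z <= V)%MS, e1 != 0, ~~ (z <= e1)%MS & forall x, (br x e1 <= e1)%MS].

Definition dim3_diagonal_form :=
  exists (gamma : CC) x1 x2 x3, gamma != 0 /\ is_basis [:: x1; x2; x3] /\
    [/\ br x1 x2 = x2, br x1 x3 = gamma *: x3 & br x2 x3 = 0].

Definition dim3_jordan_form :=
  exists x1 x2 x3, is_basis [:: x1; x2; x3] /\
    [/\ br x1 x2 = x2, br x1 x3 = x2 + x3 & br x2 x3 = 0].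

Definition dim4_diagonal_form :=
  exists x1 x2 x3 x4, is_basis [:: x1; x2; x3; x4] /\
    (br x1 x2 = x2 /\ br x1 x3 = 0 /\ br x1 x4 = 0 /\ br x2 x3 = 0 /\
     br x2 x4 = 0 /\ br x3 x4 = x4).

Definition dim4_jordan_form :=
  exists x1 x2 x3 x4, is_basis [:: x1; x2; x3; x4] /\
    (br x1 x2 = 0 /\ br x1 x3 = 0 /\ br x1 x4 = x3 /\ br x2 x3 = x3 /\
     br x2 x4 = x4 /\ br x3 x4 = 0).

Section Frame.
Variables e1 z : 'rV[CC]_n.
Hypothesis frame : is_frame e1 z.

Let e1V : (e1 <= V)%MS. Proof. by case: frame. Qed.
Let zV : (z <= V)%MS. Proof. by case: frame. Qed.
Let e10 : e1 != 0. Proof. by case: frame. Qed.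
Let ze1 : ~~ (z <= e1)%MS. Proof. by case: frame. Qed.
Let ad_e1 x : (br x e1 <= e1)%MS. Proof. by case: frame. Qed.

Lemma frame_span : (V <= e1 + z)%MS.
Proof. exact: rank2_spanned. Qed.

Lemma frame_sub m (M : 'M_(m, n)) : (e1 <= M)%MS -> (z <= M)%MS -> (V <= M)%MS.
Proof. by move=> e1M zM; apply: submx_trans frame_span _; rewrite addsmx_sub e1M. Qed.

Lemma frame_coord v : (v <= V)%MS -> exists c d, v = c *: e1 + d *: z.
Proof. by move=> vV; apply/sub_adds_rVP; apply: submx_trans frame_span. Qed.

Lemma exists_ad_quotient_nonzero : exists b, ~~ (br b z <= e1)%MS.
Proof.
apply: NNPP => nob; apply: (@brV_notin_line e1) => x v /frame_coord [c [d ->]].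
rewrite brDr !brZr addmx_scale_sub //; apply: contraT => xz.
by exfalso; apply: nob; exists x.
Qed.

Lemma exists_ad_eigen_nonzero : exists a, br a e1 != 0.
Proof.
apply: NNPP => noa; have ad_e1_0 x : br x e1 = 0.
  by apply/eqP; apply: contra_notT noa => ?; exists x.
have [b bz] := exists_ad_quotient_nonzero.
have [p [q bzE]] := frame_coord (brV b z).
have q0 : q != 0.
  by apply: contraNneq bz => q0; rewrite bzE q0 scale0r addr0 scalemx_sub.
apply: (@brV_notin_line (br b z)) => x v /frame_coord [c [d ->]].
rewrite brDr !brZr ad_e1_0 scaler0 add0r.
have [p' [q' xzE]] := frame_coord (brV x z).
have Exz : q *: br x z = q' *: br b z.
  by have := ad_commute_on_V x b zV; rewrite {1}bzE {1}xzE !brDr !brZr !ad_e1_0 !scaler0 !add0r.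
have -> : br x z = (q^-1 * q') *: br b z by rewrite -scalerA -Exz scalerK.
by rewrite scalerA scalemx_sub.
Qed.

Lemma exists_ad_invertible : exists y0, br y0 e1 != 0 /\ ~~ (br y0 z <= e1)%MS.
Proof.
have [a ae1] := exists_ad_eigen_nonzero; have [b bz] := exists_ad_quotient_nonzero.
have [az|az] := boolP (br a z <= e1)%MS; last by exists a.
have [be1|be1] := eqVneq (br b e1) 0; last by exists b.
exists (a + b); rewrite !brDl be1 addr0; split=> //.
apply: contra bz => abz; rewrite -[br b z](addKr (br a z)).
by apply: addmx_sub abz; rewrite eqmx_opp.
Qed.

Section Invertible.
Variable y0 : 'rV[CC]_n.
Hypotheses (y0e1 : br y0 e1 != 0) (y0z : ~~ (br y0 z <= e1)%MS).

Let y0z_free : ~~ (br y0 z <= br y0 e1)%MS.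
Proof. by apply: contra y0z => /submx_trans; apply. Qed.

Lemma ad_inj_on_V v : (v <= V)%MS -> br y0 v = 0 -> v = 0.
Proof.
case/frame_coord => c [d ->]; rewrite brDr !brZr => /(free2_eq0 y0e1 y0z_free) [-> ->].
by rewrite !scale0r addr0.
Qed.

Lemma ad_surj_on_V w : (w <= V)%MS -> exists2 v, (v <= V)%MS & br y0 v = w.
Proof.
move=> wV; have := rank2_spanned rankV (brV y0 e1) (brV y0 z) y0e1 y0z_free.
case/(submx_trans wV)/sub_adds_rVP => a [b ->].
by exists (a *: e1 + b *: z); rewrite ?addmx_scale_sub // brDr !brZr.
Qed.

Lemma central_of_centralizer k : ~~ (k <= V)%MS -> (forall v, (v <= V)%MS -> br k v = 0) ->
  exists2 z0, ~~ (z0 <= V)%MS & forall y, br z0 y = 0.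
Proof.
move=> kV kc; have [v vV y0v] := ad_surj_on_V (brV y0 k).
exists (k - v) => [|y].
  by apply: contra kV => kvV; rewrite -(subrK v k) addmx_sub.
apply: ad_inj_on_V; first exact: brV.
rewrite br_leibniz brBr y0v subrr br0l add0r brBl kc ?brV //.
by rewrite derived_abelian ?brV // subrr.
Qed.

End Invertible.

Lemma diagonalize_on_V y l p q : br y e1 = l *: e1 -> br y z = p *: e1 + q *: z -> l != q ->
  exists2 e2, is_frame e1 e2 & br y e2 = q *: e2.
Proof.
move=> ye1 yz lq; have ql0 : q - l != 0 by rewrite subr_eq0 eq_sym.
exists (z + (p / (q - l)) *: e1); last first.
  by rewrite brDr brZr ye1 yz; apply/rowP => i; rewrite !mxE; field.
split=> //; first by rewrite addmx_sub ?scalemx_sub.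
apply: contra ze1 => /addmx_sub /(_ (scalemx_sub (- (p / (q - l))) (submx_refl e1))).
by rewrite scaleNr addrK.
Qed.

Section Dim3.
Variable y0 : 'rV[CC]_n.
Hypotheses (n3 : n = 3) (full3 : (1%:M <= V + y0)%MS).

Lemma dim3_diagonal_normal l q : l != 0 -> q != 0 ->
  br y0 e1 = l *: e1 -> br y0 z = q *: z -> dim3_diagonal_form.
Proof.
move=> l0 q0 ye1 yz; exists (q / l), (l^-1 *: y0), e1, z.
split; first by rewrite mulf_neq0 ?invr_eq0.
split.
  apply: (is_basis_of_full _ full3); first exact: esym n3.
  rewrite addsmx_sub frame_sub; try by in_basis.
  by rewrite -[X in (X <= _)%MS](scalerKV l0) scalemx_sub //; in_basis.
split; last exact: derived_abelian.
- by rewrite brZl ye1 scalerK.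
- by rewrite brZl yz scalerA mulrC.
Qed.

Lemma dim3_jordan_normal l p : l != 0 -> p != 0 ->
  br y0 e1 = l *: e1 -> br y0 z = p *: e1 + l *: z -> dim3_jordan_form.
Proof.
move=> l0 p0 ye1 yz; have pl0 : p / l != 0 by rewrite mulf_neq0 ?invr_eq0.
exists (l^-1 *: y0), ((p / l) *: e1), z; split.
  apply: (is_basis_of_full _ full3); first exact: esym n3.
  rewrite addsmx_sub frame_sub; last by in_basis.
    by rewrite -[X in (X <= _)%MS](scalerKV l0) scalemx_sub //; in_basis.
  by rewrite -[X in (X <= _)%MS](scalerK pl0) scalemx_sub //; in_basis.
split.
- by rewrite brZl brZr ye1; apply/rowP => i; rewrite !mxE; field.
- by rewrite brZl yz; apply/rowP => i; rewrite !mxE; field.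
- by rewrite brZl derived_abelian ?scaler0.
Qed.

End Dim3.

Section Dim4.
Variables a2 b : 'rV[CC]_n.
Hypotheses (n4 : n = 4) (full4 : (1%:M <= V + a2 + b)%MS).
Hypotheses (b_id : forall v, (v <= V)%MS -> br b v = v) (a2e1 : br a2 e1 = 0).

Lemma dim4_diagonal_normal : br a2 z = z -> dim4_diagonal_form.
Proof.
move=> a2z; set c := b - a2.
have ce1 : br c e1 = e1 by rewrite brBl a2e1 b_id // subr0.
have cz : br c z = 0 by rewrite brBl a2z b_id // subrr.
have [s [t ca2]] := frame_coord (brV c a2).
exists (c + t *: z), e1, (a2 - s *: e1), z; split.
  apply: (is_basis_of_full _ full4); first exact: esym n4.
  have a2B : (a2 <= span [:: c + t *: z; e1; a2 - s *: e1; z]%R)%MS.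
    rewrite -[X in (X <= _)%MS](subrK (s *: e1) a2).
    by apply: addmx_sub; [in_basis | apply: scalemx_sub; in_basis].
  have cB : (c <= span [:: c + t *: z; e1; a2 - s *: e1; z]%R)%MS.
    rewrite -[X in (X <= _)%MS](addrK (t *: z) c).
    by apply: addmx_sub; [in_basis | rewrite eqmx_opp; apply: scalemx_sub; in_basis].
  rewrite !addsmx_sub frame_sub ?a2B; try by in_basis.
  by rewrite -[b](subrK a2) addmx_sub.
have ze1' : br z e1 = 0 by exact: derived_abelian.
do !split.
- by rewrite brDl ce1 brZl ze1' scaler0 addr0.
- rewrite brDl !brBr !brZr ca2 ce1 !brZl (brC z a2) a2z ze1'.
  by apply/rowP => i; rewrite !mxE; ring.
- by rewrite brDl cz brZl brxx scaler0 addr0.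
- by rewrite brBr brZr brxx scaler0 subr0 brC a2e1 oppr0.
- exact: derived_abelian.
- by rewrite brBl a2z brZl derived_abelian ?scaler0 ?subr0.
Qed.

Lemma dim4_jordan_normal : br a2 z = e1 -> dim4_jordan_form.
Proof.
move=> a2z; set w := br a2 b; have wV : (w <= V)%MS by apply: brV.
exists (a2 + w), b, e1, z; split.
  apply: (is_basis_of_full _ full4); first exact: esym n4.
  rewrite !addsmx_sub frame_sub; try by in_basis.
  rewrite -[X in (X <= _)%MS](addrK w a2) addmx_sub ?eqmx_opp ?(submx_trans wV) ?frame_sub //;
    in_basis.
do !split.
- by rewrite brDl (brC w b) b_id // subrr.
- by rewrite brDl a2e1 derived_abelian ?add0r.
- by rewrite brDl a2z derived_abelian ?addr0.
- exact: b_id.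
- exact: b_id.
- exact: derived_abelian.
Qed.

End Dim4.

End Frame.

Lemma exists_frame : exists e1 z, is_frame e1 z.
Proof.
have [e1 [e1V e10 ad_e1]] := common_eigenvector.
have [z [zV ze1 _]] := rank2_complete rankV e1V e10.
by exists e1, z; split.
Qed.

Lemma nonscalar_moves_line a : ~ scalar_on_V a -> exists2 u, (u <= V)%MS & ~~ (br a u <= u)%MS.
Proof.
move=> nsa; apply: NNPP => fix_lines.
have inv u : (u <= V)%MS -> exists m, br a u = m *: u.
  by move=> uV; apply/sub_rVP; apply: contraT => au; exfalso; apply: fix_lines; exists u.
have [u1 [u2 [u1V u10 u2V u21 Vu]]] := rank2_basis rankV.
have [m1 a1] := inv _ u1V; have [m2 a2] := inv _ u2V.
have [m3 /eqP] := inv _ (addmx_sub u1V u2V).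
rewrite brDr a1 a2 scalerDr -subr_eq0 opprD addrACA -!scalerBl.
move=> /eqP /(free2_eq0 u10 u21) [/eqP + /eqP]; rewrite !subr_eq0 => /eqP m13 /eqP m23.
by apply: nsa; apply: (scalar_on_span Vu (_ : br a u1 = m3 *: u1)); rewrite ?a1 ?a2 ?m13 ?m23.
Qed.

Lemma ad_span_nonscalar a x : ~ scalar_on_V a ->
  exists al be, forall v, (v <= V)%MS -> br x v = al *: v + be *: br a v.
Proof.
move=> /nonscalar_moves_line [u uV au].
have u0 : u != 0 by apply: contraNneq au => ->; rewrite br0r sub0mx.
have Vu := rank2_spanned rankV uV (brV a u) u0 au.
case/sub_adds_rVP: (submx_trans (brV x u) Vu) => al [be xu].
exists al, be => v /submx_trans /(_ Vu) /sub_adds_rVP [c [d ->]].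
rewrite !brDr !brZr (ad_commute_on_V x a uV) xu brDr !brZr.
by apply/rowP => i; rewrite !mxE; ring.
Qed.

Lemma dim3_normal_form e1 z y0 : is_frame e1 z -> br y0 e1 != 0 -> ~~ (br y0 z <= e1)%MS ->
  n = 3 -> (1%:M <= V + y0)%MS -> dim3_jordan_form \/ dim3_diagonal_form.
Proof.
move=> fr y0e1 y0z n3 full3; have [_ _ _ _ ad_e1] := fr.
have /sub_rVP [l ye1] := ad_e1 y0.
have l0 : l != 0 by apply: contraNneq y0e1 => l0; rewrite ye1 l0 scale0r.
have [p [q yz]] := frame_coord fr (brV y0 z).
have q0 : q != 0.
  by apply: contraNneq y0z => q0; rewrite yz q0 scale0r addr0 scalemx_sub.
have [ql|] := eqVneq q l; last rewrite eq_sym => lq.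
  have [p0|p0] := eqVneq p 0.
    by right; apply: (dim3_diagonal_normal fr n3 full3 l0 l0 ye1); rewrite yz p0 ql scale0r add0r.
  by left; apply: (dim3_jordan_normal fr n3 full3 l0 p0 ye1); rewrite yz ql.
have [e2 fr2 ye2] := diagonalize_on_V fr ye1 yz lq.
by right; exact: (dim3_diagonal_normal fr2 n3 full3 l0 q0 ye1 ye2).
Qed.

Lemma dim4_normal_form e1 z a b : is_frame e1 z -> ~ scalar_on_V a ->
  (forall v, (v <= V)%MS -> br b v = v) -> n = 4 -> (1%:M <= V + a + b)%MS ->
  dim4_diagonal_form \/ dim4_jordan_form.
Proof.
move=> fr nsa b_id n4 full; have [e1V zV _ _ ad_e1] := fr.
have /sub_rVP [mu ae1] := ad_e1 a.
have [p [q az]] := frame_coord fr (brV a z).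
(* a' kills e1, so on V it is either nilpotent (q = mu) or diagonalizable with eigenvalues
   0 and q - mu. *)
set a' := a - mu *: b.
have a'e1 : br a' e1 = 0 by rewrite brBl brZl ae1 b_id // subrr.
have a'z : br a' z = p *: e1 + (q - mu) *: z.
  by rewrite brBl brZl az b_id //; apply/rowP => i; rewrite !mxE; ring.
have full' c : c != 0 -> (1%:M <= V + c *: a' + b)%MS.
  move=> c0; apply: submx_trans full _; rewrite !addsmx_sub addsmxSr andbT.
  rewrite (submx_trans (addsmxSl V _) (addsmxSl _ b)) /=.
  have -> : a = c^-1 *: (c *: a') + mu *: b by rewrite scalerK // subrK.
  by apply: addmx_sub_adds; apply: scalemx_sub; rewrite ?addsmxSr ?submx_refl.
have [qmu|qmu] := eqVneq q mu.
  have p0 : p != 0.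
    apply/eqP => p0; apply: nsa; apply: (scalar_on_span (frame_span fr) ae1).
    by rewrite az p0 qmu scale0r add0r.
  right; apply: (dim4_jordan_normal fr n4 (full' _ (invr_neq0 p0)) b_id).
    by rewrite brZl a'e1 scaler0.
  by rewrite brZl a'z qmu subrr scale0r addr0 scalerK.
have r0 : q - mu != 0 by rewrite subr_eq0.
have a'e1_scal : br a' e1 = 0 *: e1 by rewrite scale0r.
have [|e2 fr2 a'e2] := diagonalize_on_V fr a'e1_scal a'z; first by rewrite eq_sym.
left; apply: (dim4_diagonal_normal fr2 n4 (full' _ (invr_neq0 r0)) b_id).
  by rewrite brZl a'e1 scaler0.
by rewrite brZl a'e2 scalerK.
Qed.

Section Pure.
Hypothesis pure : lie_pure br.

Lemma centralizer_V_sub k : (forall v, (v <= V)%MS -> br k v = 0) -> (k <= V)%MS.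
Proof.
move=> kc; apply: contraT => kV; have [e1 [z fr]] := exists_frame.
have [y0 [y0e1 y0z]] := exists_ad_invertible fr.
have [z0 z0V z0c] := central_of_centralizer fr y0e1 y0z kV kc.
by case: (central_not_pure z0V z0c pure).
Qed.

Lemma exists_nonscalar_identity y0 y1 : ~~ (y0 <= V)%MS -> ~~ (y1 <= V + y0)%MS ->
  exists a b, ~ scalar_on_V a /\ forall v, (v <= V)%MS -> br b v = v.
Proof.
move=> y0V y1V; have [[mu y0mu]|nsy0] := classic (scalar_on_V y0).
  have mu0 : mu != 0.
    apply: contra y0V => /eqP mu0; apply: centralizer_V_sub => v vV.
    by rewrite y0mu // mu0 scale0r.
  have [[al y1al]|nsy1] := classic (scalar_on_V y1).
    case/negP: y1V; apply: (@sub_adds_of_comb _ _ _ _ mu (- al)) => //.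
    apply: centralizer_V_sub => v vV.
    by rewrite brDl !brZl y1al // y0mu // !scalerA mulrC mulNr scaleNr addrN.
  by exists y1, (mu^-1 *: y0); split=> // v vV; rewrite brZl y0mu // scalerK.
have [al [be y1ad]] := ad_span_nonscalar y1 nsy0.
have y1'al v : (v <= V)%MS -> br (y1 - be *: y0) v = al *: v.
  by move=> vV; rewrite brBl brZl y1ad // addrK.
have al0 : al != 0.
  apply: contra y1V => /eqP al0; apply: (sub_adds_of_comb (oner_neq0 CC) (b := - be)).
  rewrite scale1r scaleNr; apply: centralizer_V_sub => v vV.
  by rewrite y1'al // al0 scale0r.
by exists y0, (al^-1 *: (y1 - be *: y0)); split=> // v vV; rewrite brZl y1'al // scalerK.
Qed.

Lemma nonscalar_identity_full a b : ~ scalar_on_V a ->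
  (forall v, (v <= V)%MS -> br b v = v) -> (1%:M <= V + a + b)%MS.
Proof.
move=> nsa b_id; apply/rV_subP => y _; have [al [be yad]] := ad_span_nonscalar y nsa.
have kV : (y - be *: a - al *: b <= V)%MS.
  by apply: centralizer_V_sub => v vV; rewrite !brBl !brZl yad // b_id // addrK subrr.
have -> : y = (y - be *: a - al *: b) + be *: a + al *: b.
  by apply/rowP => i; rewrite !mxE; ring.
by apply: addmx_sub_adds; [apply: addmx_sub_adds|]; rewrite // scalemx_sub.
Qed.

Lemma classification :
  dim4_diagonal_form \/ dim4_jordan_form \/ dim3_jordan_form \/ dim3_diagonal_form.
Proof.
have [e1 [z fr]] := exists_frame; have [e1V _ _ _ _] := fr.
have [y0 [y0e1 y0z]] := exists_ad_invertible fr.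
have y0V : ~~ (y0 <= V)%MS by apply: contra y0e1 => /derived_abelian ->.
have rank3 : \rank (V + y0)%MS = 3 by rewrite mxrank_adds_notin ?rankV.
have n_ge3 : (3 <= n)%N by rewrite -[X in (X <= _)%N]rank3 rank_leq_col.
have [n3|n_ne3] := eqVneq n 3.
  do 2 right; apply: (dim3_normal_form fr y0e1 y0z n3).
  by rewrite sub1mx /row_full rank3 n3.
have [|y1 _ y1V] := @notin_of_mxrank_ltn _ _ _ _ (V + y0)%MS (1%:M : 'M_n).
  by rewrite mxrank1 rank3 ltn_neqAle eq_sym n_ne3.
have [a [b [nsa b_id]]] := exists_nonscalar_identity y0V y1V.
have full := nonscalar_identity_full nsa b_id.
have n4 : n = 4.
  have := mxrankS full; rewrite mxrank1.
  have := mxrank_adds_rV (V + a)%MS b; have := mxrank_adds_rV V a.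
  rewrite rankV; lia.
by case: (dim4_normal_form fr nsa b_id n4 full) => ?; [left | right; left].
Qed.

End Pure.
End DerivedPlane.
End LieAlgebra.

Theorem theorem3p9 (n : nat) (br : 'rV[CC]_n -> 'rV[CC]_n -> 'rV[CC]_n) :
  is_lie_bracket br ->
  lie_pure br -> ~ lie_nilpotent br -> lie_solvable br ->
  has_breadth br 2 ->
  \rank (lcs br 1) = 2%N ->
  (forall k, (2 <= k)%N -> \rank (lcs br k) = 2%N) ->
  (exists x1 x2 x3 x4 x5,
     is_basis [:: x1; x2; x3; x4; x5] /\
     (br x1 x2 = 0 /\ br x1 x3 = 0 /\ br x1 x4 = 0 /\ br x1 x5 = x4 /\ br x2 x3 = 0 /\
      br x2 x4 = x4 /\ br x2 x5 = 0 /\ br x3 x4 = 0 /\ br x3 x5 = x5 /\ br x4 x5 = 0))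
  \/
  (exists x1 x2 x3 x4,
     is_basis [:: x1; x2; x3; x4] /\
     (br x1 x2 = x2 /\ br x1 x3 = 0 /\ br x1 x4 = 0 /\ br x2 x3 = 0 /\
      br x2 x4 = 0 /\ br x3 x4 = x4))
  \/
  (exists x1 x2 x3 x4,
     is_basis [:: x1; x2; x3; x4] /\
     (br x1 x2 = 0 /\ br x1 x3 = 0 /\ br x1 x4 = x3 /\ br x2 x3 = x3 /\
      br x2 x4 = x4 /\ br x3 x4 = 0))
  \/
  (exists x1 x2 x3,
     is_basis [:: x1; x2; x3] /\
     [/\ br x1 x2 = x2, br x1 x3 = x2 + x3 & br x2 x3 = 0])
  \/
  (exists (gamma : CC) x1 x2 x3,
     gamma != 0 /\ is_basis [:: x1; x2; x3] /\
     [/\ br x1 x2 = x2, br x1 x3 = gamma *: x3 & br x2 x3 = 0]).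
Proof.
move=> Hbr pure _ _ _ rankV rank_lcs.
by right; apply: (classification Hbr rankV (rank_lcs 2 (leqnn 2)) pure).
Qed.
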